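(* Let $F$ be a commutative field. Then $\mathrm{PG}(4,F)$ admits no linear line partition.
   Context: A line spread of a projective space is a set of lines such that each point lies on exactly one of them. A line partition $\Omega$ of $\mathrm{PG}(n,F)$ is a partition of its set of lines into line spreads of hyperplanes such that each hyperplane contains exactly one of these spreads; $\pi_\Omega$ maps each line to the hyperplane containing its class. $\Omega$ is linear if $\pi_\Omega$ is a linear mapping from the Grassmannian of lines (points = lines of $\mathrm{PG}(n,F)$, G-lines = pencils of lines through a point in a plane) to the dual space $\mathrm{PG}(n,F)^*$; since $\pi_\Omega$ is everywhere defined, this means that every pencil of lines is mapped bijectively onto a pencil of hyperplanes through some $(n-2)$-subspace. *)

From HB Require Import structures.
From mathcomp Require Import all_boot all_algebra.
Set Implicit Arguments. Unset Strict Implicit. Unset Printing Implicit Defensive.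
Import GRing.Theory.
Local Open Scope ring_scope.

(* PG(n,F) is modelled by the vector space F^(n+1) = 'rV[F]_(n.+1):
   projective points   = vector subspaces of dimension 1,
   projective lines    = vector subspaces of dimension 2,
   projective planes   = vector subspaces of dimension 3,
   (n-2)-subspaces     = vector subspaces of dimension n-1,
   hyperplanes         = vector subspaces of dimension n. *)

Section PG.
Variables (F : fieldType) (n : nat).
Notation sub := {vspace 'rV[F]_(n.+1)}.

Definition is_line_spread_of (H : sub) (S : sub -> Prop) : Prop :=
  (forall L, S L -> \dim L = 2%N /\ (L <= H)%VS) /\
  (forall p : sub, \dim p = 1%N -> (p <= H)%VS ->
     exists! L : sub, S L /\ (p <= L)%VS).

(* A line partition Omega is encoded by its map pi_Omega (line |-> hyperplane
   containing its class): each line is sent to a hyperplane, and for every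
   hyperplane H the class pi^-1(H) is a line spread of H. *)
Definition line_partition (pi : sub -> sub) : Prop :=
  (forall L : sub, \dim L = 2%N -> \dim (pi L) = n) /\
  (forall H : sub, \dim H = n ->
     is_line_spread_of H (fun L => \dim L = 2%N /\ pi L = H)).

Definition in_pencil (p P L : sub) : Prop :=
  \dim L = 2%N /\ (p <= L)%VS /\ (L <= P)%VS.

Definition linear_lp (pi : sub -> sub) : Prop :=
  forall p P : sub, \dim p = 1%N -> \dim P = 3%N -> (p <= P)%VS ->
  exists S : sub, \dim S = n.-1 /\
    (forall L, in_pencil p P L -> (S <= pi L)%VS) /\
    (forall L1 L2, in_pencil p P L1 -> in_pencil p P L2 ->
        pi L1 = pi L2 -> L1 = L2) /\
    (forall H : sub, \dim H = n -> (S <= H)%VS ->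
        exists L, in_pencil p P L /\ pi L = H).

End PG.

From HB Require Import structures.
From mathcomp Require Import all_boot all_algebra.
From mathcomp Require Import zify.
Import GRing.Theory.
Set Implicit Arguments. Unset Strict Implicit. Unset Printing Implicit Defensive.

(* Let the pencil of lines through a point p in a plane P be sent by pi onto
   the pencil of hyperplanes through S.  If some line of the pencil has P in
   its image, then P lies in S: otherwise, every line N of the pencil not in S
   spans with S a hyperplane, forcing pi N = S + P for two distinct such lines,
   against injectivity on the pencil.  In PG(4,F) this means S = P.
   Now take any line L, its hyperplane H = pi L, a plane P with L <= P <= H and
   a point w of P off L.  Applying the above to the pencil at a point of L (via
   L) and then to the pencil at w (via the line joining them), some line N
   through w in P has pi N = H.  But N and L are coplanar, so they meet, and
   being in the same spread of H they coincide, although w lies on N, not on L. *)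

Section VspaceFacts.
Variables (K : fieldType) (vT : vectType K).
Implicit Types (U V W : {vspace vT}) (w : vT).

Lemma subv_dim_eq U V : (U <= V)%VS -> \dim V <= \dim U -> U = V.
Proof. by move=> sUV leVU; apply/eqP; rewrite eqEdim sUV. Qed.

Lemma ltn_dimv_subvN U W : \dim U < \dim W -> ~~ (W <= U)%VS.
Proof. by apply: contraTN => /dimvS; rewrite leqNgt. Qed.

Lemma dimv_addv_line U w : w \notin U -> \dim (U + <[w]>) = (\dim U).+1.
Proof.
move=> wU; have w0 : w != 0%R by apply: contraNneq wU => ->; apply: mem0v.
have : \dim (U :&: <[w]>) < \dim <[w]>.
  by rewrite (ltn_leqif (dimv_leqif_sup (capvSr U _))) subv_cap subvv andbT -memvE.
have := dimv_sum_cap U <[w]>; rewrite dim_vline w0; lia.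
Qed.

Lemma exists_subv_of_dim k U W : (U <= W)%VS -> \dim U <= k <= \dim W ->
  exists V, [/\ (U <= V)%VS, (V <= W)%VS & \dim V = k].
Proof.
move=> sUW; elim: k => [|k IHk] /andP[leUk lekW].
  by exists U; move: leUk; rewrite leqn0 => /eqP.
have [eqUk | ltUk] := eqVneq (\dim U) k.+1; first by exists U.
have [|V [sUV sVW dimV]] := IHk; first by rewrite -ltnS ltn_neqAle ltUk leUk ltnW.
have /subvPn[w wW wV] : ~~ (W <= V)%VS by apply: ltn_dimv_subvN; rewrite dimV.
exists (V + <[w]>)%VS; split.
- exact: subv_trans sUV (addvSl _ _).
- by rewrite subv_add sVW -memvE.
- by rewrite dimv_addv_line // dimV.
Qed.

Lemma exists_notin2 U V W : ~~ (W <= U)%VS -> ~~ (W <= V)%VS ->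
  exists w, [/\ w \in W, w \notin U & w \notin V].
Proof.
move=> /subvPn[a aW aU] /subvPn[b bW bV].
have [aV | aV] := boolP (a \in V); last by exists a.
have [bU | bU] := boolP (b \in U); last by exists b.
exists (a + b)%R; split; first exact: memvD.
- by apply: contra aU => abU; rewrite -(addrK b a) memvB.
- by apply: contra bV => abV; rewrite -(addKr a b) memvD ?memvN.
Qed.

Lemma dimv_cap_gt0 U V W : (U <= W)%VS -> (V <= W)%VS ->
  \dim W < \dim U + \dim V -> 0 < \dim (U :&: V).
Proof.
move=> sUW sVW; have : (U + V <= W)%VS by rewrite subv_add sUW.
move/dimvS; have := dimv_sum_cap U V; lia.
Qed.

End VspaceFacts.

Section LinearLinePartition.
Variables (F : fieldType) (n : nat).
Variable pi : {vspace 'rV[F]_n.+1} -> {vspace 'rV[F]_n.+1}.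
Hypotheses (pi_partition : line_partition pi) (pi_linear : linear_lp pi).
Implicit Types (p r P L N H : {vspace 'rV[F]_n.+1}).

Lemma line_partition_dim L : \dim L = 2 -> \dim (pi L) = n.
Proof. exact: pi_partition.1. Qed.

Lemma line_partition_sub L : \dim L = 2 -> (L <= pi L)%VS.
Proof.
move=> dimL; have [_ spread] := pi_partition.
exact: ((spread _ (line_partition_dim dimL)).1 L (conj dimL erefl)).2.
Qed.

Lemma line_partition_eq_of_meet r L N : \dim L = 2 -> \dim N = 2 ->
  pi L = pi N -> \dim r = 1 -> (r <= L)%VS -> (r <= N)%VS -> L = N.
Proof.
move=> dimL dimN piLN dimr rL rN.
have [_ spread] := pi_partition.
have [_ /(_ r dimr)] := spread _ (line_partition_dim dimL).
case=> [|L' [_ uniqL']]; first exact: subv_trans rL (line_partition_sub dimL).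
by rewrite -(uniqL' L) ?(uniqL' N).
Qed.

Lemma linear_lp_center_sup_plane p P M :
  \dim p = 1 -> \dim P = 3 -> (p <= P)%VS -> in_pencil p P M -> (P <= pi M)%VS ->
  exists S, [/\ \dim S = n.-1, (P <= S)%VS,
    forall L, in_pencil p P L -> (S <= pi L)%VS &
    forall H, \dim H = n -> (S <= H)%VS -> exists L, in_pencil p P L /\ pi L = H].
Proof.
move=> dimp dimP pP penM PpiM; have dimM := penM.1.
have [S [dimS [S_pi [pi_inj pi_onto]]]] := pi_linear dimp dimP pP.
exists S; split=> //; apply/idPn => PS.
have dimSP : \dim (S + P) <= n.
  rewrite -[X in _ <= X](line_partition_dim dimM).
  by apply: dimvS; rewrite subv_add S_pi.
have pi_off_S N : in_pencil p P N -> ~~ (N <= S)%VS -> pi N = (S + P)%VS.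
  move=> penN NS; have [dimN [_ NP]] := penN.
  have : \dim (S :&: N) < \dim N.
    by rewrite (ltn_leqif (dimv_leqif_sup (capvSr S N))) subv_cap subvv andbT.
  have := dimv_sum_cap S N; rewrite dimN dimS => dimSN ltSN.
  have SN_pi : (S + N <= pi N)%VS by rewrite subv_add S_pi ?line_partition_sub.
  have <- : (S + N)%VS = pi N.
    by apply: subv_dim_eq SN_pi _; rewrite line_partition_dim //; lia.
  by apply: subv_dim_eq; [rewrite addvS | apply: leq_trans dimSP _; lia].
have line_through_p y : y \in P -> y \notin p -> in_pencil p P (p + <[y]>)%VS.
  move=> yP yp; split; first by rewrite dimv_addv_line ?dimp.
  by rewrite addvSl subv_add pP -memvE.
have [|y [yP yS yp]] := exists_notin2 (V := p) PS.
  by rewrite ltn_dimv_subvN ?dimp ?dimP.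
have [|z [zP zS zN1]] := exists_notin2 (V := (p + <[y]>)%VS) PS.
  by rewrite ltn_dimv_subvN // dimv_addv_line ?dimp ?dimP.
have zp : z \notin p by apply: contra zN1; apply: subvP; apply: addvSl.
have zN2 : z \in (p + <[z]>)%VS by rewrite memvE addvSr.
have penN1 := line_through_p _ yP yp; have penN2 := line_through_p _ zP zp.
have piN12 : pi (p + <[y]>)%VS = pi (p + <[z]>)%VS.
  rewrite (pi_off_S _ penN1) ?(pi_off_S _ penN2) //.
  - by apply: contra zS => /subvP; apply.
  - by apply: contra yS => /subvP; apply; rewrite memvE addvSr.
by move: zN1; rewrite (pi_inj _ _ penN1 penN2 piN12) zN2.
Qed.

End LinearLinePartition.

Lemma pencil_onto_hyperplanes_through_plane (F : fieldType)
    (pi : {vspace 'rV[F]_5} -> {vspace 'rV[F]_5}) p P M :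
  line_partition pi -> linear_lp pi ->
  \dim p = 1 -> \dim P = 3 -> (p <= P)%VS -> in_pencil p P M -> (P <= pi M)%VS ->
  (forall L, in_pencil p P L -> (P <= pi L)%VS) /\
  (forall H, \dim H = 4 -> (P <= H)%VS -> exists L, in_pencil p P L /\ pi L = H).
Proof.
move=> pi_partition pi_linear dimp dimP pP penM PpiM.
have [S [dimS PS S_pi pi_onto]] :=
  linear_lp_center_sup_plane pi_partition pi_linear dimp dimP pP penM PpiM.
have eqPS : P = S by apply: subv_dim_eq PS _; rewrite dimS dimP.
by subst S.
Qed.

Theorem proposition7p3 (F : fieldType) :
  ~ (exists pi : {vspace 'rV[F]_5} -> {vspace 'rV[F]_5},
       line_partition pi /\ linear_lp pi).
Proof.
move=> [pi [pi_partition pi_linear]].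
have [|L [_ _ dimL]] :=
  exists_subv_of_dim (k := 2) (sub0v (fullv : {vspace 'rV[F]_5})).
  by rewrite dimv0 dimvf dim_matrix.
have dimH := line_partition_dim pi_partition dimL.
have LH := line_partition_sub pi_partition dimL.
have [|P [LP PH dimP]] := exists_subv_of_dim (k := 3) LH; first by rewrite dimL dimH.
have [|q [_ qL dimq]] := exists_subv_of_dim (k := 1) (sub0v L).
  by rewrite dimv0 dimL.
have /subvPn[w wP wL] : ~~ (P <= L)%VS by apply: ltn_dimv_subvN; rewrite dimL dimP.
have wq : w \notin q by apply: contra wL; apply: subvP qL w.
have dimqw : \dim (q + <[w]>) = 2 by rewrite dimv_addv_line // dimq.
have qwP : (q + <[w]> <= P)%VS by rewrite subv_add (subv_trans qL LP) -memvE.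
have [P_pi _] := pencil_onto_hyperplanes_through_plane pi_partition pi_linear
  dimq dimP (subv_trans qL LP) (conj dimL (conj qL LP)) PH.
have w0 : w != 0%R by apply: contraNneq wL => ->; apply: mem0v.
have dimw : \dim <[w]> = 1 by rewrite dim_vline w0.
have wlineP : (<[w]> <= P)%VS by rewrite -memvE.
have [_ onto_w] := pencil_onto_hyperplanes_through_plane pi_partition pi_linear
  dimw dimP wlineP (conj dimqw (conj (addvSr _ _) qwP))
  (P_pi _ (conj dimqw (conj (addvSl _ _) qwP))).
have [N [[dimN [wN NP]] piN]] := onto_w _ dimH PH.
have [|r [_ rNL dimr]] := exists_subv_of_dim (k := 1) (sub0v (N :&: L)).
  by rewrite dimv0 (dimv_cap_gt0 NP LP) // dimN dimL dimP.
have eqNL := line_partition_eq_of_meet pi_partition dimN dimL piN dimr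
  (subv_trans rNL (capvSl _ _)) (subv_trans rNL (capvSr _ _)).
by move: wL; rewrite -eqNL memvE wN.
Qed.
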